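(* Let $\mu$ be a finite positive measure on $(\Omega,\mathcal B)$ with no atoms. Let $X=\operatorname{sp}\{1_A-1_B: A,B\in\mathcal B,\ \mu(A)=\mu(B)\}$, let $X_1$ be the norm closure of $X$ in $L_1(\mu)$ and $X_\infty$ the weak$^*$ ($\sigma(L_\infty,L_1)$) closure of $X$ in $L_\infty(\mu)$. Then $X_1=L^0_1$ and $X_\infty=L^0_\infty$, where $L^0_1=\{f\in L_1(\mu):\int f\,d\mu=0\}$ and $L^0_\infty=\{f\in L_\infty(\mu):\int f\,d\mu=0\}$.
   Context: An atom of $\mu$ is a set $A\in\mathcal B$ with $\mu(A)>0$ such that every measurable $B\subset A$ has $\mu(B)\in\{0,\mu(A)\}$. $\operatorname{sp}$ denotes linear span. *)

From HB Require Import structures.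
From mathcomp Require Import all_boot all_order all_algebra.
From mathcomp Require Import all_classical all_reals all_analysis.
Set Implicit Arguments. Unset Strict Implicit. Unset Printing Implicit Defensive.
Import Order.TTheory GRing.Theory Num.Theory.
Local Open Scope classical_set_scope.
Local Open Scope ring_scope.

(* Elements of L_p are represented by real-valued functions (representatives);
   all sets below are invariant under a.e. modification. *)

Section Defs.
Context {d : measure_display} {T : measurableType d} {R : realType}.
Variable mu : {measure set T -> \bar R}.

Definition is_atom (A : set T) : Prop :=
  measurable A /\ (0 < mu A)%E /\
  forall B, measurable B -> B `<=` A -> mu B = 0%E \/ mu B = mu A.

Definition no_atoms : Prop := forall A, ~ is_atom A.

Definition Xspan : set (T -> R) :=
  [set f : T -> R | exists n (c : 'I_n -> R) (A B : 'I_n -> set T),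
     (forall i, measurable (A i) /\ measurable (B i) /\ mu (A i) = mu (B i)) /\
     f = (fun x => \sum_(i < n) c i * (\1_(A i) x - \1_(B i) x))].

Definition L1 : set (T -> R) := [set f : T -> R | mu.-integrable setT (EFin \o f)].

Definition Linfty : set (T -> R) :=
  [set f : T -> R | measurable_fun setT f /\ exists M : R, {ae mu, forall x, `|f x| <= M}].

Definition L1_closure (S : set (T -> R)) : set (T -> R) :=
  [set f : T -> R | f \in L1 /\ forall e : R, 0 < e ->
     exists2 g, S g & (\int[mu]_x (`|f x - g x|)%:E < e%:E)%E].

(* weak* (sigma(L_infty, L_1)) closure in L_infty: every basic weak*
   neighbourhood of f, given by finitely many h_1..h_n in L_1 and e > 0,
   meets S *)
Definition weakstar_closure (S : set (T -> R)) : set (T -> R) :=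
  [set f : T -> R | f \in Linfty /\ forall (n : nat) (h : 'I_n -> T -> R) (e : R),
     (forall i, h i \in L1) -> 0 < e ->
     exists2 g, S g & forall i,
       (`| \int[mu]_x ((f x - g x) * h i x)%:E | < e%:E)%E].

Definition L1_0 : set (T -> R) :=
  [set f : T -> R | f \in L1 /\ (\int[mu]_x (f x)%:E = 0)%E].

Definition Linfty_0 : set (T -> R) :=
  [set f : T -> R | f \in Linfty /\ (\int[mu]_x (f x)%:E = 0)%E].

End Defs.

From HB Require Import structures.
From mathcomp Require Import all_boot all_order all_algebra.
From mathcomp Require Import all_classical all_reals all_analysis.
From mathcomp Require Import measurable_realfun ring lra.
Import numFieldNormedType.Exports HBSimple.
Import Order.TTheory GRing.Theory Num.Theory.
Set Implicit Arguments. Unset Strict Implicit.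
Local Open Scope classical_set_scope.
Local Open Scope ring_scope.

(* Integrating against the constant 1 shows that both closures consist of
   functions of integral zero.  Conversely, write nu for the (finite) measure.
   For disjoint P and Q, the dipole (nu Q 1_P - nu P 1_Q) / (nu P + nu Q) is
   approximated uniformly by X through a Euclidean algorithm: by Sierpinski's
   theorem (an atomless measure takes every intermediate value on subsets) one
   cuts a set D with nu D = nu P out of Q, which costs a multiple of
   1_P - 1_D in X, until the rest Q' of Q is smaller than P; what is left is
   at most 2/3 times the dipole of P and Q', so the error decays
   geometrically.  Since the dipole of E and its complement is 1_E up to a
   constant, every bounded measurable function is a uniform limit of elements
   of X plus constants, and integrating shows that the constant is small when
   the integral is.  L_infty functions are bounded up to a null set, and L_1
   functions are L_1-limits of simple functions. *)

Lemma sum_stair (R : archiRealFieldType) (e y : R) (K : nat) :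
  0 < e -> 0 <= y -> y < K%:R * e ->
  y - e < \sum_(k < K) e * ((k.+1)%:R * e <= y)%R%:R <= y.
Proof.
move=> e0 y0 yK; have ye0 : 0 <= y / e by rewrite divr_ge0// ltW.
have nK : (Num.truncn (y / e) <= K)%N.
  by rewrite ltnW// truncn_lt_nat// ltr_pdivrMr.
have -> : \sum_(k < K) e * ((k.+1)%:R * e <= y)%R%:R = e * (Num.truncn (y / e))%:R.
  rewrite -mulr_sumr; congr (e * _).
  under eq_bigr do rewrite -ler_pdivlMr// -truncn_gt_nat.
  rewrite -(big_mkord xpredT (fun k => (k < Num.truncn (y / e))%:R)).
  rewrite (big_cat_nat (leq0n _) nK) /=.
  rewrite (@eq_big_nat _ _ _ 0 _ _ (fun=> 1)); last by move=> i /andP[_ ->].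
  rewrite sumr_const_nat subn0 [X in _ + X]big1_seq ?addr0// => i /andP[_].
  by rewrite mem_index_iota => /andP[/leq_gtF->].
have /andP[ny yn] := truncn_itv ye0.
rewrite ler_pdivlMr// in ny; rewrite ltr_pdivrMr// -natr1 mulrDl mul1r in yn.
by apply/andP; split; lra.
Qed.

Lemma expr_le_small (R : archiRealFieldType) (r e : R) :
  `|r| < 1 -> 0 < e -> exists k, r ^+ k <= e.
Proof.
move=> r1 e0; have [N _ rN] := cvgr0_norm_lt _ (cvg_expr r1) _ e0.
by exists N; rewrite (le_trans (ler_norm _))// ltW// rN/=.
Qed.

Lemma indic_setDU {T : Type} {R : pzRingType} (D Q : set T) (x : T) : D `<=` Q ->
  \1_Q x = \1_D x + \1_(Q `\` D) x :> R.
Proof.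
move=> DQ; rewrite !indicE in_setD; have [Dx|_] := boolP (x \in D).
  by rewrite (mem_set (DQ _ (set_mem Dx))) addr0.
by rewrite add0r andbT.
Qed.

Section Xspan_closure.
Context {d : measure_display} {T : measurableType d} {R : realType}.
Variable mu : {finite_measure set T -> \bar R}.
Local Notation X := (Xspan mu).

Definition nu A := fine (mu A).

Lemma measure_fineE A : measurable A -> mu A = (nu A)%:E.
Proof. by move=> mA; rewrite fineK// fin_num_measure. Qed.

Lemma nu_ge0 A : 0 <= nu A.
Proof. exact: fine_ge0. Qed.

Lemma nu0 : nu set0 = 0.
Proof. by rewrite /nu measure0. Qed.

Lemma nu_le A B : measurable A -> measurable B -> A `<=` B -> nu A <= nu B.
Proof. by move=> mA mB AB; rewrite -lee_fin -!measure_fineE// le_measure ?inE. Qed.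

Lemma nuU A B : measurable A -> measurable B -> A `&` B = set0 ->
  nu (A `|` B) = nu A + nu B.
Proof.
move=> mA mB AB; apply: EFin_inj.
by rewrite EFinD -!measure_fineE ?measureU//; exact: measurableU.
Qed.

Lemma nuD A B : measurable A -> measurable B -> B `<=` A ->
  nu (A `\` B) = nu A - nu B.
Proof.
move=> mA mB BA; have -> : nu A = nu (B `|` (A `\` B)) by rewrite setDUK.
rewrite nuU //; [by rewrite addrAC subrr add0r|exact: measurableD|].
by rewrite setDE setICA setICr setI0.
Qed.

Lemma nu_gt0 A : measurable A -> mu A <> 0%E -> 0 < nu A.
Proof.
move=> mA A0; rewrite lt_def nu_ge0 andbT; apply: contra_notN A0 => /eqP A0.
by rewrite measure_fineE// A0.
Qed.

Lemma nu_addr_neq0 A B : 0 < nu A -> nu A + nu B != 0.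
Proof. by move=> A0; rewrite lt0r_neq0//; have := nu_ge0 B; lra. Qed.

Lemma nu_eq0_of_nuT0 A : measurable A -> nu setT = 0 -> nu A = 0.
Proof. by move=> mA T0; apply/eqP; rewrite eq_le nu_ge0 andbT -T0 nu_le. Qed.

Lemma Xspan0 : X (fun=> 0).
Proof.
exists 0%N, (fun=> 0), (fun=> set0), (fun=> set0); split; first by case.
by apply/funext => x; rewrite big_ord0.
Qed.

Lemma Xspan_indic_diff A B : measurable A -> measurable B -> mu A = mu B ->
  X (fun x => \1_A x - \1_B x).
Proof.
move=> mA mB AB; exists 1%N, (fun=> 1), (fun=> A), (fun=> B); split => //.
by apply/funext => x; rewrite big_ord1 mul1r.
Qed.

Lemma XspanZ c f : X f -> X (fun x => c * f x).
Proof.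
move=> [n [a [A [B [ABi ->]]]]]; exists n, (fun i => c * a i), A, B; split => //.
by apply/funext => x; rewrite mulr_sumr; under eq_bigr do rewrite mulrA.
Qed.

Lemma XspanD f g : X f -> X g -> X (fun x => f x + g x).
Proof.
move=> [n [a [A [B [ABi ->]]]]] [m [b [C [D [CDi ->]]]]].
pose join U (u : 'I_n -> U) (v : 'I_m -> U) (i : 'I_(n + m)) :=
  match fintype.split i with inl j => u j | inr j => v j end.
exists (n + m)%N, (join _ a b), (join _ A C), (join _ B D); split.
  by move=> i; rewrite /join; case: (fintype.split i).
apply/funext => x; rewrite big_split_ord; congr (_ + _); apply: eq_bigr => i _.
  by rewrite /join -[lshift m i]/(unsplit (inl i)) unsplitK.
by rewrite /join -[rshift n i]/(unsplit (inr i)) unsplitK.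
Qed.

Lemma XspanN f : X f -> X (fun x => - f x).
Proof. by move=> /(XspanZ (-1)); under eq_fun do rewrite mulN1r. Qed.

Lemma Xspan_ind (P : (T -> R) -> Prop) : P (fun=> 0) ->
  (forall f c A B, measurable A -> measurable B -> mu A = mu B -> P f ->
     P (fun x => f x + c * (\1_A x - \1_B x))) ->
  forall f, X f -> P f.
Proof.
move=> P0 PS f [n [c [A [B [ABi ->]]]]].
elim: n => [|n IHn] in c A B ABi *; first by under eq_fun do rewrite big_ord0.
under eq_fun do rewrite big_ord_recr /=.
have [mA [mB AB]] := ABi ord_max; apply: PS => //.
by apply: IHn => i; exact: ABi.
Qed.

Lemma eq_Xspan f g : X f -> f =1 g -> X g.
Proof. by move=> Xf /funext <-. Qed.

Definition dipole (P Q : set T) (x : T) : R :=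
  (nu Q * \1_P x - nu P * \1_Q x) / (nu P + nu Q).

Lemma dipole_le1 P Q x : P `&` Q = set0 -> `|dipole P Q x| <= 1.
Proof.
move=> PQ; have p0 := nu_ge0 P; have q0 := nu_ge0 Q.
have [pq0|pq_neq0] := eqVneq (nu P + nu Q) 0.
  by rewrite /dipole pq0 invr0 mulr0 normr0.
have pq_gt0 : 0 < nu P + nu Q by rewrite lt_def pq_neq0 addr_ge0.
rewrite /dipole normrM normfV (gtr0_norm pq_gt0) ler_pdivrMr// mul1r !indicE.
have : ~~ ((x \in P) && (x \in Q)) by rewrite -in_setI PQ in_set0.
case: (x \in P); case: (x \in Q) => //= _;
  rewrite ?mulr1 ?mulr0 ?subr0 ?sub0r ?normrN ?normr0 ?ger0_norm; lra.
Qed.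

Lemma dipoleC P Q x : dipole P Q x = - dipole Q P x.
Proof. by rewrite /dipole -[RHS]mulNr opprB (addrC (nu Q)). Qed.

Definition dipole_reduces P Q Q' := X (fun x =>
  dipole P Q x - (nu P + nu Q') / (nu P + nu Q) * dipole P Q' x).

Lemma dipole_reduces_refl P Q : 0 < nu P -> dipole_reduces P Q Q.
Proof.
move=> p0; rewrite /dipole_reduces divff ?nu_addr_neq0//.
by apply: (eq_Xspan Xspan0) => x; rewrite mul1r subrr.
Qed.

Lemma dipole_reduces_trans P Q Q1 Q' : 0 < nu P ->
  dipole_reduces P Q Q1 -> dipole_reduces P Q1 Q' -> dipole_reduces P Q Q'.
Proof.
move=> p0 XQQ1 XQ1Q'.
have := XspanD XQQ1 (XspanZ ((nu P + nu Q1) / (nu P + nu Q)) XQ1Q').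
move/eq_Xspan; apply => x.
by field; rewrite !nu_addr_neq0.
Qed.

Lemma dipole_reduces_cut P Q D : measurable P -> measurable Q -> measurable D ->
  D `<=` Q -> nu D = nu P -> 0 < nu P -> dipole_reduces P Q (Q `\` D).
Proof.
move=> mP mQ mD DQ DP p0.
have mPD : mu P = mu D by rewrite !measure_fineE// DP.
have QD : nu P + nu (Q `\` D) = nu Q by rewrite nuD// DP addrC subrK.
have q0 : nu Q != 0 by rewrite lt0r_neq0// (lt_le_trans p0)// -DP nu_le.
have := XspanZ (nu P / (nu P + nu Q)) (Xspan_indic_diff mP mD mPD).
move/eq_Xspan; apply => x.
rewrite /dipole QD (indic_setDU x DQ) nuD// DP; field.
by rewrite q0 nu_addr_neq0.
Qed.

Lemma Xspan_dipole_null P Q : measurable P -> nu P = 0 -> X (dipole P Q).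
Proof.
move=> mP p0; have mP0 : mu P = mu set0 by rewrite measure0 measure_fineE// p0.
have := XspanZ (nu Q / (nu P + nu Q)) (Xspan_indic_diff mP measurable0 mP0).
move/eq_Xspan; apply => x.
by rewrite /dipole p0 indic0 /= !(mul0r, add0r, subr0) mulrAC.
Qed.

Lemma bounded_integrable (f : T -> R) (M : R) : measurable_fun setT f ->
  (forall x, `|f x| <= M) -> mu.-integrable setT (EFin \o f).
Proof.
move=> mf fM; apply: measurable_bounded_integrable => //.
  exact: fin_num_fun_lty.
exists M; split; rewrite ?num_real// => y My x _ /=.
by rewrite (le_trans (fM x))// ltW.
Qed.

Lemma indic_diff_bounded (A B : set T) (x : T) : `|\1_A x - \1_B x| <= 1 :> R.
Proof.
rewrite !indicE; case: (x \in A); case: (x \in B);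
  by rewrite /= ?subrr ?subr0 ?sub0r ?normrN ?normr0 ?normr1.
Qed.

Lemma Xspan_bounded_integral0 (g : T -> R) : X g ->
  [/\ measurable_fun setT g, exists M, forall x, `|g x| <= M
    & (\int[mu]_x (g x)%:E = 0)%E].
Proof.
elim/Xspan_ind => [|f c A B mA mB AB [mf [M fM] f0]].
  by split; [exact: measurable_cst|exists 0 => x; rewrite normr0|exact: integral0].
have mAB : measurable_fun setT (fun x => c * (\1_A x - \1_B x)).
  by apply: measurable_funM => //; apply: measurable_funB; exact: measurable_indic.
have cAB x : `|c * (\1_A x - \1_B x)| <= `|c|.
  by rewrite normrM ler_piMr// indic_diff_bounded.
split; first exact: measurable_funD.
  by exists (M + `|c|) => x; rewrite (le_trans (ler_normD _ _))// lerD.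
under eq_integral do rewrite EFinD.
rewrite integralD_EFin//=; [|exact: bounded_integrable fM|exact: bounded_integrable cAB].
rewrite f0 add0e; under eq_integral do rewrite EFinM.
have intAB : mu.-integrable setT (fun x => (\1_A x - \1_B x)%:E).
  apply: (bounded_integrable (M := 1)); last exact: indic_diff_bounded.
  by apply: measurable_funB; exact: measurable_indic.
rewrite integralZl//; under eq_integral do rewrite EFinB.
rewrite integralB_EFin//; try exact: integrable_indic.
rewrite !integral_indic// !setIT.
have -> : (mu : {measure set T -> \bar R}) A = mu B := AB.
by rewrite subee ?mule0// fin_num_measure.
Qed.

Lemma Xspan_integrable (g : T -> R) : X g -> mu.-integrable setT (EFin \o g).
Proof. by move=> /Xspan_bounded_integral0[mg [M gM] _]; exact: bounded_integrable gM. Qed.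

Lemma Xspan_Rintegral (g : T -> R) : X g -> \int[mu]_x g x = 0.
Proof. by move=> /Xspan_bounded_integral0[_ _ g0]; rewrite /Rintegral g0. Qed.

Lemma approx_cst_le (s g : T -> R) (c e M : R) : measurable_fun setT s ->
  (forall x, `|s x| <= M) -> X g -> (forall x, `|s x - c - g x| <= e) ->
  `|c| * nu setT <= `|\int[mu]_x s x| + e * nu setT.
Proof.
move=> ms sM Xg sg; have [mg _ _] := Xspan_bounded_integral0 Xg.
have ints := bounded_integrable ms sM.
have intc : mu.-integrable setT (EFin \o cst c).
  exact: finite_measure_integrable_cst.
have mscg : measurable_fun setT (fun x => s x - c - g x).
  by apply: measurable_funB => //; apply: measurable_funB => //; exact: measurable_cst.
have intsc : mu.-integrable setT (EFin \o (fun x => s x - c)).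
  apply: (bounded_integrable (M := M + `|c|)).
    by apply: measurable_funB => //; exact: measurable_cst.
  by move=> x; rewrite (le_trans (ler_normB _ _))// lerD.
have int_scg : \int[mu]_x (s x - c - g x) = \int[mu]_x s x - c * nu setT.
  rewrite RintegralB//; last exact: Xspan_integrable.
  by rewrite RintegralB// Rintegral_cst// (Xspan_Rintegral Xg) subr0.
have le_scg : `|\int[mu]_x (s x - c - g x)| <= e * nu setT.
  have intscg := bounded_integrable mscg sg.
  rewrite (le_trans (le_normr_Rintegral _ intscg))// -Rintegral_cst//.
  rewrite le_Rintegral//; first exact: integrable_norm.
  exact: finite_measure_integrable_cst.
have -> : `|c| * nu setT = `|c * nu setT| by rewrite normrM (ger0_norm (nu_ge0 _)).
have -> : c * nu setT = \int[mu]_x s x - \int[mu]_x (s x - c - g x).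
  by rewrite int_scg; ring.
by rewrite (le_trans (ler_normB _ _))// lerD.
Qed.

Lemma integrableB_EFin (f g : T -> R) : mu.-integrable setT (EFin \o f) ->
  mu.-integrable setT (EFin \o g) -> mu.-integrable setT (EFin \o (fun x => f x - g x)).
Proof. exact: integrableB. Qed.

Lemma integrableD_EFin (f g : T -> R) : mu.-integrable setT (EFin \o f) ->
  mu.-integrable setT (EFin \o g) -> mu.-integrable setT (EFin \o (fun x => f x + g x)).
Proof. exact: integrableD. Qed.

Lemma L1_dist_Xspan_le (f s g : T -> R) (c dl M : R) :
  mu.-integrable setT (EFin \o f) -> measurable_fun setT s ->
  (forall x, `|s x| <= M) -> X g -> (forall x, `|s x - c - g x| <= dl) ->
  \int[mu]_x `|f x - g x| <=
    `|\int[mu]_x f x| + 2 * \int[mu]_x `|f x - s x| + 2 * dl * nu setT.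
Proof.
move=> intf ms sM Xg sg; have cle := approx_cst_le ms sM Xg sg.
have ints := bounded_integrable ms sM; have intg := Xspan_integrable Xg.
have intfs := integrable_norm (integrableB measurableT intf ints).
have intk : mu.-integrable setT (EFin \o cst (dl + `|c|)).
  exact: finite_measure_integrable_cst.
have fg_le :
    \int[mu]_x `|f x - g x| <= \int[mu]_x `|f x - s x| + (dl + `|c|) * nu setT.
  rewrite -Rintegral_cst// -RintegralD//; apply: le_Rintegral => //.
  - exact: integrable_norm (integrableB measurableT intf intg).
  - exact: integrableD_EFin intfs intk.
  move=> x _; have -> : f x - g x = (f x - s x) + ((s x - c - g x) + c) by ring.
  by rewrite (le_trans (ler_normD _ _))// lerD// (le_trans (ler_normD _ _))// lerD.
have s_le : `|\int[mu]_x s x| <= `|\int[mu]_x f x| + \int[mu]_x `|f x - s x|.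
  have -> : \int[mu]_x s x = \int[mu]_x f x - \int[mu]_x (f x - s x).
    by rewrite RintegralB//; ring.
  rewrite (le_trans (ler_normB _ _))// lerD// le_normr_Rintegral//.
  exact: integrableB_EFin.
by move: fg_le cle s_le; rewrite mulrDl; lra.
Qed.

Definition approx_cst_Xspan (f : T -> R) := forall e, 0 < e ->
  exists c, exists2 g, X g & forall x, `|f x - c - g x| <= e.

Lemma approx_cst_XspanD f g : approx_cst_Xspan f -> approx_cst_Xspan g ->
  approx_cst_Xspan (fun x => f x + g x).
Proof.
move=> Af Ag e e0; have e2 : 0 < e / 2 by rewrite divr_gt0.
have [c [u Xu fu]] := Af _ e2; have [c' [v Xv gv]] := Ag _ e2.
exists (c + c'), (fun x => u x + v x) => [|x]; first exact: XspanD.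
have -> : f x + g x - (c + c') - (u x + v x) = (f x - c - u x) + (g x - c' - v x).
  by ring.
by rewrite (le_trans (ler_normD _ _))// (splitr e) lerD.
Qed.

Lemma approx_cst_XspanZ a f : approx_cst_Xspan f ->
  approx_cst_Xspan (fun x => a * f x).
Proof.
move=> Af e e0; have ea : 0 < e / (`|a| + 1) by rewrite divr_gt0// ltr_pwDr.
have [c [u Xu fu]] := Af _ ea.
exists (a * c), (fun x => a * u x) => [|x]; first exact: XspanZ.
have -> : a * f x - a * c - a * u x = a * (f x - c - u x) by ring.
rewrite normrM (le_trans (ler_wpM2l (normr_ge0 a) (fu x)))//.
by rewrite mulrA ler_pdivrMr ?ltr_pwDr// mulrDr mulr1 mulrC lerDl ltW.
Qed.

Lemma approx_cst_Xspan_cst a : approx_cst_Xspan (fun=> a).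
Proof.
move=> e e0; exists a, (fun=> 0) => [|x]; first exact: Xspan0.
by rewrite subrr subr0 normr0 ltW.
Qed.

Lemma approx_cst_Xspan_ulim f : (forall e, 0 < e ->
  exists2 s, approx_cst_Xspan s & forall x, `|f x - s x| <= e) ->
  approx_cst_Xspan f.
Proof.
move=> fs e e0; have e2 : 0 < e / 2 by rewrite divr_gt0.
have [s As fs2] := fs _ e2; have [c [g Xg sg]] := As _ e2.
exists c, g => // x.
have -> : f x - c - g x = (f x - s x) + (s x - c - g x) by ring.
by rewrite (le_trans (ler_normD _ _))// (splitr e) lerD.
Qed.

Lemma integral_eq0_of_Xspan_approx (f : T -> R) :
  mu.-integrable setT (EFin \o f) ->
  (forall e, 0 < e ->
    exists2 g, X g & (`| \int[mu]_x (f x - g x)%:E | < e%:E)%E) ->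
  (\int[mu]_x (f x)%:E = 0)%E.
Proof.
move=> intf fg; have fin := integrable_fin_num measurableT intf.
rewrite -(fineK fin); congr EFin; apply/eqP; rewrite -normr_le0.
apply/ler_addgt0Pr => e e0; rewrite add0r; have [g Xg] := fg e e0.
have [_ _ g0] := Xspan_bounded_integral0 Xg.
have -> : (\int[mu]_x (f x - g x)%:E = \int[mu]_x (f x)%:E)%E.
  under eq_integral do rewrite EFinB.
  by rewrite integralB_EFin// ?g0 ?sube0//; exact: Xspan_integrable.
by rewrite -(fineK fin) abse_EFin lte_fin => /ltW.
Qed.

Lemma L1_closure_sub : L1_closure mu X `<=` L1_0 mu.
Proof.
move=> f [fL fX]; have intf : mu.-integrable setT (EFin \o f) := set_mem fL.
split => //; apply: integral_eq0_of_Xspan_approx => // e e0.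
have [g Xg fg] := fX e e0; exists g => //; apply: le_lt_trans fg.
apply: le_abse_integral => //; apply/measurable_EFinP; apply: measurable_funB.
  exact/measurable_EFinP/(measurable_int _ intf).
exact/measurable_EFinP/(measurable_int _ (Xspan_integrable Xg)).
Qed.

Lemma Linfty_integrable f : Linfty mu f -> mu.-integrable setT (EFin \o f).
Proof.
move=> [mf [M fM]]; apply/integrableP; split; first exact/measurable_EFinP.
apply: (@le_lt_trans _ _ (\int[mu]_x (cst `|M|%:E x))%E).
  apply: ae_ge0_le_integral => //.
  - by apply: measurableT_comp => //; exact/measurable_EFinP.
  - by move=> x _; rewrite lee_fin.
  - by move: fM; apply: filterS => x fxM _ /=; rewrite lee_fin (le_trans fxM)// ler_norm.
by rewrite integral_cst// -ge0_fin_numE ?fin_numM ?fin_num_measure// mule_ge0.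
Qed.

Lemma weakstar_closure_sub : weakstar_closure mu X `<=` Linfty_0 mu.
Proof.
move=> f [fL fX]; split => //.
apply: integral_eq0_of_Xspan_approx; first exact/Linfty_integrable/set_mem.
move=> e e0; have h1 (i : 'I_1) : (fun=> 1) \in L1 mu.
  exact/mem_set/finite_measure_integrable_cst.
have [g Xg fg] := fX 1%N (fun _ _ => 1) e h1 e0; exists g => //.
by move: (fg ord0); under eq_integral do rewrite mulr1.
Qed.

Lemma ae_bounded_modification (f : T -> R) (M : R) : measurable_fun setT f ->
  {ae mu, forall x, `|f x| <= M} ->
  exists s : T -> R, [/\ measurable_fun setT s, forall x, `|s x| <= `|M|
    & {ae mu, forall x, f x = s x}].
Proof.
move=> mf fM; exists ((cst (- `|M|)) \max ((cst `|M|) \min f)); split.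
- by apply: measurable_maxr; [exact: measurable_cst|apply: measurable_minr].
- move=> x; rewrite ler_norml /= le_max lexx ge_max ge_min lexx /= andbT.
  by have := normr_ge0 M; lra.
- apply: filterS fM => x /le_trans/(_ (ler_norm M)).
  by rewrite ler_norml => /andP[lo hi]; rewrite /= min_r// max_r.
Qed.

Lemma integrable_approx_bounded (f : T -> R) (e : R) :
  mu.-integrable setT (EFin \o f) -> 0 < e ->
  exists s : T -> R, [/\ measurable_fun setT s, exists M, forall x, `|s x| <= M
    & (\int[mu]_x (`|f x - s x|)%:E < e%:E)%E].
Proof.
move=> intf e0; have [g_ [intg _]] := approximation_sfun_integrable measurableT intf.
move/fine_fcvg/cvg_ballP/(_ e) => -[]// N _ Nb; exists (g_ N); split => //.
  have [M [_ /= gM]] := simple_bounded (g_ N).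
  by exists (`|M| + 1) => x; rewrite gM// ltr_pwDr// ler_norm.
have fin : (\int[mu]_x `|(EFin \o f) x - (g_ N x)%:E|)%E \is a fin_num.
  rewrite integrable_fin_num// integrable_abse//.
  by apply: integrableB => //; exact: intg.
have /= := Nb _ (leqnn N); rewrite /ball/= sub0r normrN -fine_abse// -lte_fin.
rewrite fineK ?abse_fin_num// => /le_lt_trans; apply.
by rewrite (le_trans _ (lee_abs _))//; apply: ge0_le_integral.
Qed.

Lemma abse_integral_mulr_le (f s g h : T -> R) (dl : R) :
  measurable_fun setT f -> measurable_fun setT s -> measurable_fun setT g ->
  mu.-integrable setT (EFin \o h) -> {ae mu, forall x, f x = s x} ->
  (forall x, `|s x - g x| <= dl) ->
  (`|\int[mu]_x ((f x - g x) * h x)%:E| <= (dl * \int[mu]_x `|h x|)%:E)%E.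
Proof.
move=> mf ms mg inth fs sg.
have mh : measurable_fun setT h by apply/measurable_EFinP; exact: measurable_int inth.
have mphi (u : T -> R) : measurable_fun setT u ->
    measurable_fun setT (EFin \o (fun x => (u x - g x) * h x)).
  by move=> mu_; apply/measurable_EFinP/measurable_funM => //; exact: measurable_funB.
rewrite (ae_eq_integral (EFin \o (fun x => (s x - g x) * h x)) _ measurableT
  (mphi _ mf) (mphi _ ms)); last by move: fs; apply: filterS => x /= -> _.
apply: le_trans (le_abse_integral mu measurableT (mphi _ ms)) _.
have inth_abs := integrable_norm inth.
apply: (@le_trans _ _ (\int[mu]_x (dl%:E * (`|h x|)%:E))%E).
  apply: ge0_le_integral => //.
  - exact/measurableT_comp/mphi.
  - by apply/measurable_EFinP/measurable_funM => //; exact: measurableT_comp.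
  - by move=> x _ /=; rewrite -EFinM lee_fin normrM ler_wpM2r.
rewrite integralZl// /Rintegral EFinM fineK//.
by rewrite (integrable_fin_num measurableT inth_abs).
Qed.

Section atomless.
Hypothesis mu_atomless : no_atoms mu.

Lemma atomless_halve B : measurable B -> 0 < nu B ->
  exists C, [/\ measurable C, C `<=` B, 0 < nu C & nu C * 2 <= nu B].
Proof.
move=> mB B0.
have [C [mC CB C0 CB']] : exists C, [/\ measurable C, C `<=` B,
    mu C <> 0%E & mu C <> mu B].
  apply: contrapT => noC; apply: (mu_atomless (A := B)); split => //; split.
    by change (0 < mu B)%E; rewrite measure_fineE// lte_fin.
  move=> C mC CB; change (mu C = 0%E \/ mu C = mu B).
  have [->|C0] := pselect (mu C = 0%E); first by left.
  have [->|CB'] := pselect (mu C = mu B); first by right.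
  by case: noC; exists C.
have C0' := nu_gt0 mC C0.
have CB'' : nu C < nu B.
  rewrite lt_def nu_le// andbT; apply: contra_notN CB' => /eqP CBE.
  by rewrite !measure_fineE// CBE.
have [CBle|CBgt] := leP (nu C * 2) (nu B); first by exists C.
exists (B `\` C); rewrite nuD//; split => //; [exact: measurableD|lra|lra].
Qed.

Lemma atomless_small A e : measurable A -> 0 < nu A -> 0 < e ->
  exists B, [/\ measurable B, B `<=` A, 0 < nu B & nu B < e].
Proof.
move=> mA A0 e0.
have halving n : exists B,
    [/\ measurable B, B `<=` A, 0 < nu B & nu B * 2 ^+ n <= nu A].
  elim: n => [|n [B [mB BA B0 Bn]]].
    by exists A; split; rewrite // expr0 mulr1.
  have [C [mC CB C0 CB2]] := atomless_halve mB B0.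
  exists C; split => //; first exact: subset_trans CB BA.
  by rewrite exprS mulrA (le_trans _ Bn)// ler_pM2r ?exprn_gt0.
have [n nAe] : exists n, nu A / e < 2 ^+ n.
  exists (Num.truncn (nu A / e)).+1.
  apply: (lt_le_trans (truncnS_gt _)); rewrite -natrX ler_nat.
  exact/ltnW/ltn_expl.
have [B [mB BA B0 Bn]] := halving n; exists B; split => //.
rewrite -(ltr_pM2r (exprn_gt0 n (ltr0Sn R 1))) (le_lt_trans Bn)//.
by rewrite mulrC -ltr_pdivrMr.
Qed.

Section greedy.
Variables (A : set T) (t : R).
Hypotheses (mA : measurable A) (t0 : 0 <= t) (tA : t <= nu A).

Definition admissible (B C : set T) :=
  [/\ measurable C, C `<=` A `\` B & nu B + nu C <= t].

Lemma greedy_step_ex B : exists C, measurable B /\ nu B <= t ->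
  admissible B C /\ forall C', admissible B C' -> nu C' <= 2 * nu C.
Proof.
have [[mB Bt]|nP] := pselect (measurable B /\ nu B <= t); last by exists set0.
pose E := [set nu C | C in admissible B].
have E0 : E 0 by exists set0; [split; rewrite ?nu0 ?addr0|exact: nu0].
have supE : has_sup E.
  split; first by exists 0.
  by exists t => _ [C [_ _ BCt] <-]; move: (nu_ge0 B) BCt; lra.
have [s0|s_gt0] := eqVneq (sup E) 0.
  exists set0 => _; split; first by split; rewrite ?nu0 ?addr0.
  by move=> C aC; rewrite nu0 mulr0 -s0; apply: sup_upper_bound => //; exists C.
have s_gt0' : 0 < sup E / 2.
  by rewrite divr_gt0// lt_def s_gt0 sup_upper_bound.
have [_ [C aC <-] Cs] := sup_adherent s_gt0' supE.
exists C => _; split => // C' aC'.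
have : nu C' <= sup E by apply: sup_upper_bound => //; exists C'.
lra.
Qed.

Definition greedy_ext B := projT1 (cid (greedy_step_ex B)).
Definition greedy n := iter n (fun B => B `|` greedy_ext B) set0.

Lemma greedy_extP B : measurable B -> nu B <= t ->
  admissible B (greedy_ext B) /\
  forall C, admissible B C -> nu C <= 2 * nu (greedy_ext B).
Proof. by move=> mB Bt; exact: (projT2 (cid (greedy_step_ex B))). Qed.

Lemma greedyS n : greedy n.+1 = greedy n `|` greedy_ext (greedy n).
Proof. by []. Qed.

Lemma greedy_inv n :
  [/\ measurable (greedy n), greedy n `<=` A & nu (greedy n) <= t].
Proof.
elim: n => [|n [mB BA Bt]]; first by rewrite /greedy /= nu0; split.
have [[mC CAB Ct] _] := greedy_extP mB Bt.
have BC0 : greedy n `&` greedy_ext (greedy n) = set0.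
  by apply/seteqP; split => // x [xB /CAB[]].
rewrite greedyS nuU//; split => //; first exact: measurableU.
by move=> x [/BA|/CAB[]].
Qed.

Lemma nu_greedyS n :
  nu (greedy n.+1) = nu (greedy n) + nu (greedy_ext (greedy n)).
Proof.
have [mB _ Bt] := greedy_inv n; have [[mC CAB _] _] := greedy_extP mB Bt.
by rewrite greedyS nuU//; apply/seteqP; split => // x [xB /CAB[]].
Qed.

Lemma sierpinski : exists B, [/\ measurable B, B `<=` A & nu B = t].
Proof.
pose U := \bigcup_n greedy n.
have mB n : measurable (greedy n) by have [] := greedy_inv n.
have mU : measurable U by exact: bigcupT_measurable.
have UA : U `<=` A by move=> x [n _]; have [_ + _] := greedy_inv n; apply.
have Ut : nu U <= t.
  have greedy_nd : {homo greedy : n m / (n <= m)%N >-> (n <= m)%O}.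
    by apply/nondecreasing_seqP => n; rewrite subsetEset greedyS; exact: subsetUl.
  have cvU := nondecreasing_cvg_mu (mu := mu) mB mU greedy_nd.
  rewrite -lee_fin -measure_fineE// -(cvg_lim _ cvU)//; apply: lime_le.
    by apply/cvg_ex; exists (mu U).
  by apply: nearW => n; have [_ _] := greedy_inv n; rewrite /= measure_fineE.
exists U; split => //; apply/eqP; rewrite eq_le Ut /= leNgt; apply/negP => Ult.
have mAU : measurable (A `\` U) by exact: measurableD.
have AU0 : 0 < nu (A `\` U) by rewrite nuD// subr_gt0 (lt_le_trans Ult).
have tU0 : 0 < t - nu U by rewrite subr_gt0.
have [D [mD DAU D0 Dt]] := atomless_small mAU AU0 tU0.
(* D could be added at every step, so every step adds at least nu D / 2. *)
have ext_ge n : nu D <= 2 * nu (greedy_ext (greedy n)).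
  have [mBn BnA Bnt] := greedy_inv n.
  apply: (greedy_extP mBn Bnt).2; split => //.
    by move=> x /DAU[xA xU]; split => // xB; apply: xU; exists n.
  have : nu (greedy n) <= nu U by apply: nu_le => // x xB; exists n.
  lra.
have greedy_ge n : n%:R * nu D <= 2 * nu (greedy n).
  elim: n => [|n IHn]; first by rewrite nu0 mul0r mulr0.
  by rewrite nu_greedyS -natr1 mulrDl mul1r mulrDr; have := ext_ge n; lra.
have [_ _ Bt] := greedy_inv (Num.truncn (2 * t / nu D)).+1.
have := greedy_ge (Num.truncn (2 * t / nu D)).+1.
have := truncnS_gt (2 * t / nu D); rewrite ltr_pdivrMr//; lra.
Qed.
End greedy.

Lemma dipole_euclid P Q : measurable P -> measurable Q -> 0 < nu P ->
  exists Q', [/\ measurable Q', Q' `<=` Q, nu Q' < nu P & dipole_reduces P Q Q'].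
Proof.
move=> mP mQ p0; have [n] : exists n, nu Q < n%:R * nu P.
  by exists (Num.truncn (nu Q / nu P)).+1; rewrite -ltr_pdivrMr// truncnS_gt.
elim: n => [|n IHn] in Q mQ *.
  by rewrite mul0r => /(le_lt_trans (nu_ge0 Q)); rewrite ltxx.
move=> qn; have [qp|pq] := ltP (nu Q) (nu P).
  by exists Q; split => //; exact: dipole_reduces_refl.
have [D [mD DQ DP]] := sierpinski mQ (ltW p0) pq.
have mQD : measurable (Q `\` D) by exact: measurableD.
have [|Q' [mQ' Q'QD Q'p QDQ']] := IHn _ mQD.
  by rewrite nuD// DP; move: qn; rewrite -natr1 mulrDl mul1r; lra.
exists Q'; split => //; first by move=> x /Q'QD[].
exact: dipole_reduces_trans (dipole_reduces_cut mP mQ mD DQ DP p0) QDQ'.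
Qed.

Lemma dipole_contract P Q : measurable P -> measurable Q ->
  0 < nu P -> nu P <= nu Q ->
  exists Q', [/\ measurable Q', Q' `<=` Q,
    (nu P + nu Q') / (nu P + nu Q) <= 2 / 3 & dipole_reduces P Q Q'].
Proof.
move=> mP mQ p0 pq; have [D [mD DQ DP]] := sierpinski mQ (ltW p0) pq.
have mQD : measurable (Q `\` D) by exact: measurableD.
have [Q' [mQ' Q'QD Q'p QDQ']] := dipole_euclid mP mQD p0.
exists Q'; split => //; first by move=> x /Q'QD[].
  have : nu Q' <= nu Q - nu P by rewrite -DP -nuD// nu_le.
  by rewrite ler_pdivrMr ?ltr_wpDr ?nu_ge0//; lra.
exact: dipole_reduces_trans (dipole_reduces_cut mP mQ mD DQ DP p0) QDQ'.
Qed.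

Lemma dipole_approx k P Q : measurable P -> measurable Q -> P `&` Q = set0 ->
  exists2 g, X g & forall x, `|dipole P Q x - g x| <= (2 / 3) ^+ k.
Proof.
elim: k => [|k IHk] in P Q * => mP mQ PQ.
  exists (fun=> 0) => [|x]; first exact: Xspan0.
  by rewrite subr0 expr0 dipole_le1.
wlog pq : P Q mP mQ PQ / nu P <= nu Q.
  move=> wlogPQ; have [|qp] := leP (nu P) (nu Q); first exact: wlogPQ.
  have QP : Q `&` P = set0 by rewrite setIC.
  have [g Xg gQP] := wlogPQ Q P mQ mP QP (ltW qp).
  exists (fun x => - g x) => [|x]; first exact: XspanN.
  by rewrite dipoleC -opprD normrN.
have [p0|p_neq0] := eqVneq (nu P) 0.
  exists (dipole P Q) => [|x]; first exact: Xspan_dipole_null.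
  by rewrite subrr normr0 exprn_ge0.
have p_gt0 : 0 < nu P by rewrite lt_def p_neq0 nu_ge0.
have [Q' [mQ' Q'Q lam23 XQQ']] := dipole_contract mP mQ p_gt0 pq.
have PQ' : P `&` Q' = set0 by rewrite -subset0 -PQ; exact: setIS.
have [g Xg Q'g] := IHk P Q' mP mQ' PQ'.
set lam := (nu P + nu Q') / (nu P + nu Q) in lam23 XQQ'.
exists (fun x => dipole P Q x - lam * dipole P Q' x + lam * g x) => [|x].
  exact/XspanD/XspanZ.
have -> : dipole P Q x - (dipole P Q x - lam * dipole P Q' x + lam * g x) =
    lam * (dipole P Q' x - g x) by ring.
have lam0 : 0 <= lam by rewrite divr_ge0// addr_ge0// nu_ge0.
by rewrite normrM ger0_norm// exprS ler_pM.
Qed.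

Lemma approx_cst_Xspan_indic E : measurable E -> approx_cst_Xspan (\1_E).
Proof.
move=> mE e e0; have [T0|T_neq0] := eqVneq (nu setT) 0.
  have mE0 : mu E = mu set0 by rewrite measure0 measure_fineE// nu_eq0_of_nuT0.
  exists 0, (fun x => \1_E x - \1_set0 x) => [|x]; first exact: Xspan_indic_diff.
  by rewrite indic0 /= !subr0 subrr normr0 ltW.
have r1 : `|2 / 3 : R| < 1 by rewrite ger0_norm; lra.
have [k ke] := expr_le_small r1 e0.
have [g Xg Eg] := dipole_approx k mE (measurableC mE) (setICr E).
exists (nu E / nu setT), g => // x; rewrite (le_trans _ ke)//.
have nuC : nu (~` E) = nu setT - nu E by rewrite -setTD nuD.
have indC : \1_(~` E) x = 1 - \1_E x :> R.
  by rewrite !indicE in_setC; case: (x \in E); rewrite ?subrr ?subr0.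
have -> : \1_E x - nu E / nu setT = dipole E (~` E) x.
  by rewrite /dipole nuC indC (addrC (nu E)) subrK; field.
exact: Eg.
Qed.

Lemma approx_cst_Xspan_nonneg (f : T -> R) (M : R) : measurable_fun setT f ->
  (forall x, 0 <= f x <= M) -> approx_cst_Xspan f.
Proof.
move=> mf fM; apply: approx_cst_Xspan_ulim => e e0.
pose E k := f @^-1` `[(k.+1)%:R * e, +oo[.
have mE k : measurable (E k).
  by rewrite -[E k]setTI; apply: mf => //; exact: measurable_itv.
have sum_approx n : approx_cst_Xspan (fun x => \sum_(k < n) e * \1_(E k) x).
  elim: n => [|n IHn].
    by under eq_fun do rewrite big_ord0; exact: approx_cst_Xspan_cst.
  under eq_fun do rewrite big_ord_recr /=.
  exact/approx_cst_XspanD/approx_cst_XspanZ/approx_cst_Xspan_indic.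
exists (fun x => \sum_(k < (Num.truncn (M / e)).+1) e * \1_(E k) x) => // x.
have /andP[f0 fMx] := fM x.
have fK : f x < (Num.truncn (M / e)).+1%:R * e.
  by rewrite -ltr_pdivrMr// (le_lt_trans _ (truncnS_gt _))// ler_pM2r ?invr_gt0.
have E_indic k : \1_(E k) x = ((k.+1)%:R * e <= f x)%R%:R :> R.
  rewrite indicE; suff -> : (x \in E k) = ((k.+1)%:R * e <= f x)%R by [].
  apply/idP/idP => [/set_mem|h]; first by rewrite /E /= in_itv andbT.
  by apply/mem_set; rewrite /E /= in_itv andbT.
under eq_bigr do rewrite E_indic.
have /andP[lo hi] := sum_stair e0 f0 fK.
by rewrite ler_norml; apply/andP; split; lra.
Qed.

Lemma approx_cst_Xspan_bounded (f : T -> R) (M : R) : measurable_fun setT f ->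
  (forall x, `|f x| <= M) -> approx_cst_Xspan f.
Proof.
move=> mf fM; have Af : approx_cst_Xspan (fun x => f x + M - M).
  apply: approx_cst_XspanD (approx_cst_Xspan_cst _).
  apply: (@approx_cst_Xspan_nonneg _ (M + M)).
    by apply: measurable_funD => //; exact: measurable_cst.
  by move=> x; move: (fM x); rewrite ler_norml => /andP[? ?]; apply/andP; split; lra.
by move: Af; under eq_fun do rewrite addrK.
Qed.

Lemma Xspan_uapprox_Rintegral0 (s : T -> R) (M e : R) : measurable_fun setT s ->
  (forall x, `|s x| <= M) -> \int[mu]_x s x = 0 -> 0 < e ->
  exists2 g, X g & forall x, `|s x - g x| <= e.
Proof.
move=> ms sM s0 e0; have e2 : 0 < e / 2 by rewrite divr_gt0.
have [c [g Xg sg]] := approx_cst_Xspan_bounded ms sM e2.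
have [T0|T_neq0] := eqVneq (nu setT) 0.
  have mT0 : mu setT = mu set0 by rewrite measure0 measure_fineE// T0.
  exists (fun x => g x + c * (\1_setT x - \1_set0 x)) => [|x].
    exact/XspanD/XspanZ/Xspan_indic_diff.
  rewrite indicT indic0 /= subr0 mulr1.
  have -> : s x - (g x + c) = s x - c - g x by ring.
  by have := sg x; lra.
have T_gt0 : 0 < nu setT by rewrite lt_def T_neq0 nu_ge0.
have := approx_cst_le ms sM Xg sg; rewrite s0 normr0 add0r ler_pM2r// => c_le.
exists g => // x; have -> : s x - g x = (s x - c - g x) + c by ring.
by rewrite (le_trans (ler_normD _ _))//; have := sg x; lra.
Qed.

Lemma Linfty_0_sub : Linfty_0 mu `<=` weakstar_closure mu X.
Proof.
move=> f [fL f0]; split => // n h e hL e0.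
have [mf [M fM]] : Linfty mu f := set_mem fL.
have [s [ms sM fs]] := ae_bounded_modification mf fM.
have s0 : \int[mu]_x s x = 0.
  have mfE : measurable_fun setT (EFin \o f) by exact/measurable_EFinP.
  have msE : measurable_fun setT (EFin \o s) by exact/measurable_EFinP.
  have fsE : {ae mu, forall x, setT x -> (EFin \o f) x = (EFin \o s) x}.
    by move: fs; apply: filterS => x /= -> _.
  by rewrite /Rintegral -(ae_eq_integral _ _ measurableT mfE msE fsE) f0.
pose H := \sum_(i < n) \int[mu]_x `|h i x|.
have H0 : 0 <= H by apply: sumr_ge0 => i _; apply: Rintegral_ge0.
have Hi i : \int[mu]_x `|h i x| <= H.
  rewrite /H (bigD1 i)//= lerDl sumr_ge0// => j _.
  by apply: Rintegral_ge0 => x _.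
have dl0 : 0 < e / (H + 1) by rewrite divr_gt0// ltr_wpDl.
have [g Xg sg] := Xspan_uapprox_Rintegral0 ms sM s0 dl0.
exists g => // i; have [mg _ _] := Xspan_bounded_integral0 Xg.
apply: le_lt_trans (abse_integral_mulr_le mf ms mg (set_mem (hL i)) fs sg) _.
rewrite lte_fin (le_lt_trans (ler_wpM2l (ltW dl0) (Hi i)))//.
by rewrite mulrAC ltr_pdivrMr ?ltr_wpDl// mulrDr mulr1 ltrDl.
Qed.

Lemma L1_0_sub : L1_0 mu `<=` L1_closure mu X.
Proof.
move=> f [fL f0]; split => // e e0.
have intf : mu.-integrable setT (EFin \o f) := set_mem fL.
have e4 : 0 < e / 4 by rewrite divr_gt0.
have [s [ms [M sM] fs]] := integrable_approx_bounded intf e4.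
have m0 := nu_ge0 setT.
have dl0 : 0 < e / 8 / (nu setT + 1) by rewrite !divr_gt0// ltr_wpDl.
have [c [g Xg sg]] := approx_cst_Xspan_bounded ms sM dl0.
exists g => //; have := L1_dist_Xspan_le intf ms sM Xg sg.
have intfs := integrable_norm (integrableB_EFin intf (bounded_integrable ms sM)).
have intfg := integrable_norm (integrableB_EFin intf (Xspan_integrable Xg)).
have f0' : \int[mu]_x f x = 0 by rewrite /Rintegral f0.
have fs' : \int[mu]_x `|f x - s x| < e / 4.
  by rewrite -lte_fin /Rintegral fineK// (integrable_fin_num measurableT intfs).
have dl_le : e / 8 / (nu setT + 1) * nu setT <= e / 8.
  rewrite -mulrA ler_piMr ?divr_ge0 ?ltW//.
  by rewrite mulrC ltr_pdivrMr ?ltr_wpDl// mul1r ltrDl.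
have fg_fin : (\int[mu]_x (`|f x - g x|)%:E = (\int[mu]_x `|f x - g x|)%:E)%E.
  by rewrite /Rintegral fineK// (integrable_fin_num measurableT intfg).
by rewrite f0' normr0 add0r fg_fin lte_fin; lra.
Qed.

End atomless.
End Xspan_closure.

Theorem lemma1p3 (d : measure_display) (T : measurableType d) (R : realType)
  (mu : {finite_measure set T -> \bar R}) :
  no_atoms mu ->
  L1_closure mu (Xspan mu) = L1_0 mu /\
  weakstar_closure mu (Xspan mu) = Linfty_0 mu.
Proof.
move=> mu_atomless; split; apply/seteqP; split.
- exact: L1_closure_sub.
- exact: L1_0_sub.
- exact: weakstar_closure_sub.
- exact: Linfty_0_sub.
Qed.
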